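(* Let $R_e\approx1.4877$ be the unique positive root of $\frac{10}{7(R+1)}-\frac{R^2\sqrt{R}}{R^2+R+1}=0$. Then for all $0<x,y,z<R_e$, $$2d_0(y,z)+\tfrac{7}{10}\sqrt{y}\,d_1(y,z)-\tfrac{51}{100}\sqrt{yz}\,d_2(y,z)+\tfrac{10}{7}\sqrt{x}\,d_1(x,y)+\sqrt{xy}\,d_2(x,y)>\tfrac{1}{50}.$$
   Context: For $x,y\ge0$: $d_0(x,y)=\frac{1+2x}{1+x}+\frac{xy}{1+y+xy}$, $d_1(x,y)=-\frac{x}{1+x}-\frac{xy}{1+y+xy}-\frac{xy^2}{1+y+xy}\frac{1+x}{1+y}$, $d_2(x,y)=\frac{xy^2}{1+y+xy}\frac{1+x}{1+y}$. *)

From Stdlib Require Import Reals.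
Open Scope R_scope.

Definition d0 (x y : R) : R :=
  (1 + 2 * x) / (1 + x) + x * y / (1 + y + x * y).

Definition d1 (x y : R) : R :=
  - (x / (1 + x)) - x * y / (1 + y + x * y)
  - (x * y ^ 2 / (1 + y + x * y)) * ((1 + x) / (1 + y)).

Definition d2 (x y : R) : R :=
  (x * y ^ 2 / (1 + y + x * y)) * ((1 + x) / (1 + y)).

Definition fRe (r : R) : R :=
  10 / (7 * (r + 1)) - r ^ 2 * sqrt r / (r ^ 2 + r + 1).

(* With a = sqrt x, b = sqrt y, c = sqrt z the left-hand side is P(a,b,c) - N(a,b,c), where
   P = 2 d0(b^2,c^2) + a b d2(a^2,b^2) and N = -7/10 b d1(b^2,c^2) + 51/100 b c d2(b^2,c^2)
   - 10/7 a d1(a^2,b^2) are nondecreasing in each variable on the nonnegative orthant: with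
   g(y) = y/(1+y) one has d0 = 1 + g(y) + g(y g(z)), d2 = (1+y) g(z) g(y g(z)) and
   d0 + d1 + d2 = 1.  Hence on a box P - N is at least P(lower corner) - N(upper corner).
   Any positive root Re of fRe has sqrt Re < 61/50, and a bisection of the cube [0, 61/50]^3
   on which all these corner bounds exceed 1/50 is checked by exact rational arithmetic. *)

From Stdlib Require Import Reals Lra QArith Qreals.
From Pilot Require Import Defs.
Open Scope R_scope.

Definition g (y : R) : R := y / (1 + y).

Lemma g_ge0 y : 0 <= y -> 0 <= g y.
Proof. intros; unfold g; apply Rle_mult_inv_pos; lra. Qed.

Lemma g_le y1 y2 : 0 <= y1 <= y2 -> g y1 <= g y2.
Proof.
  intros Hy.
  assert (g_eq : forall y, 0 <= y -> g y = 1 - / (1 + y)) by (intros; unfold g; field; lra).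
  rewrite !g_eq by lra.
  apply Rplus_le_compat_l, Ropp_le_contravar, Rinv_le_contravar; lra.
Qed.

Lemma d0_eq y z : 0 <= y -> 0 <= z -> d0 y z = 1 + g y + g (y * g z).
Proof. intros; unfold d0, g; field; nra. Qed.

Lemma d2_eq y z : 0 <= y -> 0 <= z -> d2 y z = (1 + y) * g z * g (y * g z).
Proof. intros; unfold d2, g; field; nra. Qed.

Lemma d0_d1_d2_sum y z : 0 <= y -> 0 <= z -> d0 y z + d1 y z + d2 y z = 1.
Proof. intros; unfold d0, d1, d2; field; nra. Qed.

Definition nondecreasing2 (f : R -> R -> R) : Prop :=
  forall y1 y2 z1 z2, 0 <= y1 <= y2 -> 0 <= z1 <= z2 -> f y1 z1 <= f y2 z2.

Definition nondecreasing3 (F : R -> R -> R -> R) : Prop :=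
  forall a1 a2 b1 b2 c1 c2, 0 <= a1 <= a2 -> 0 <= b1 <= b2 -> 0 <= c1 <= c2 ->
  F a1 b1 c1 <= F a2 b2 c2.

Lemma g_mul_g_ge0 y z : 0 <= y -> 0 <= z -> 0 <= g (y * g z).
Proof. intros; apply g_ge0, Rmult_le_pos, g_ge0; lra. Qed.

Lemma g_mul_g_le : nondecreasing2 (fun y z => g (y * g z)).
Proof.
  intros y1 y2 z1 z2 Hy Hz; apply g_le; split.
  - apply Rmult_le_pos, g_ge0; lra.
  - apply Rmult_le_compat; try apply g_ge0; try apply g_le; lra.
Qed.

Lemma d0_le : nondecreasing2 d0.
Proof.
  intros y1 y2 z1 z2 Hy Hz; rewrite !d0_eq by lra.
  pose proof (g_le y1 y2 Hy); pose proof (g_mul_g_le y1 y2 z1 z2 Hy Hz); lra.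
Qed.

Lemma d2_ge0 y z : 0 <= y -> 0 <= z -> 0 <= d2 y z.
Proof.
  intros; rewrite d2_eq by lra.
  apply Rmult_le_pos; [apply Rmult_le_pos; [lra | apply g_ge0; lra] | apply g_mul_g_ge0; lra].
Qed.

Lemma d2_le : nondecreasing2 d2.
Proof.
  intros y1 y2 z1 z2 Hy Hz; rewrite !d2_eq by lra.
  apply Rmult_le_compat; [| apply g_mul_g_ge0; lra | | apply g_mul_g_le; lra].
  - apply Rmult_le_pos, g_ge0; lra.
  - apply Rmult_le_compat; [lra | apply g_ge0; lra | lra | apply g_le; lra].
Qed.

Lemma opp_d1_ge0 y z : 0 <= y -> 0 <= z -> 0 <= - d1 y z.
Proof.
  intros; pose proof (d0_d1_d2_sum y z); rewrite d0_eq in * by lra.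
  pose proof (g_ge0 y); pose proof (g_mul_g_ge0 y z); pose proof (d2_ge0 y z); lra.
Qed.

Lemma opp_d1_le : nondecreasing2 (fun y z => - d1 y z).
Proof.
  intros y1 y2 z1 z2 Hy Hz.
  pose proof (d0_d1_d2_sum y1 z1); pose proof (d0_d1_d2_sum y2 z2).
  pose proof (d0_le y1 y2 z1 z2 Hy Hz); pose proof (d2_le y1 y2 z1 z2 Hy Hz); lra.
Qed.

Definition pos_part (a b c : R) : R :=
  2 * d0 (b * b) (c * c) + a * b * d2 (a * a) (b * b).

Definition neg_part (a b c : R) : R :=
  7 / 10 * b * - d1 (b * b) (c * c) + 51 / 100 * (b * c) * d2 (b * b) (c * c)
  + 10 / 7 * a * - d1 (a * a) (b * b).

Lemma pos_part_le : nondecreasing3 pos_part.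
Proof.
  intros a1 a2 b1 b2 c1 c2 Ha Hb Hc; unfold pos_part.
  assert (Ha2 : 0 <= a1 * a1 <= a2 * a2) by nra.
  assert (Hb2 : 0 <= b1 * b1 <= b2 * b2) by nra.
  assert (Hc2 : 0 <= c1 * c1 <= c2 * c2) by nra.
  apply Rplus_le_compat.
  - apply Rmult_le_compat_l; [lra | exact (d0_le _ _ _ _ Hb2 Hc2)].
  - apply Rmult_le_compat; [nra | apply d2_ge0; lra | nra | exact (d2_le _ _ _ _ Ha2 Hb2)].
Qed.

Lemma neg_part_le : nondecreasing3 neg_part.
Proof.
  intros a1 a2 b1 b2 c1 c2 Ha Hb Hc; unfold neg_part.
  assert (Ha2 : 0 <= a1 * a1 <= a2 * a2) by nra.
  assert (Hb2 : 0 <= b1 * b1 <= b2 * b2) by nra.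
  assert (Hc2 : 0 <= c1 * c1 <= c2 * c2) by nra.
  repeat apply Rplus_le_compat; (apply Rmult_le_compat; [nra | | nra |]).
  - apply opp_d1_ge0; lra.
  - exact (opp_d1_le _ _ _ _ Hb2 Hc2).
  - apply d2_ge0; lra.
  - exact (d2_le _ _ _ _ Hb2 Hc2).
  - apply opp_d1_ge0; lra.
  - exact (opp_d1_le _ _ _ _ Ha2 Hb2).
Qed.

Lemma lhs_eq_pos_part_sub_neg_part x y z : 0 <= x -> 0 <= y -> 0 <= z ->
  2 * d0 y z + 7 / 10 * sqrt y * d1 y z - 51 / 100 * sqrt (y * z) * d2 y z
  + 10 / 7 * sqrt x * d1 x y + sqrt (x * y) * d2 x y
  = pos_part (sqrt x) (sqrt y) (sqrt z) - neg_part (sqrt x) (sqrt y) (sqrt z).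
Proof.
  intros; unfold pos_part, neg_part.
  rewrite !sqrt_mult, !sqrt_sqrt by lra; ring.
Qed.

Definition gQ (y : Q) : Q := Qred (y / (1 + y))%Q.
Definition d0Q (y z : Q) : Q := (1 + gQ y + gQ (y * gQ z))%Q.
Definition d2Q (y z : Q) : Q := ((1 + y) * gQ z * gQ (y * gQ z))%Q.
Definition d1Q (y z : Q) : Q := (1 - d0Q y z - d2Q y z)%Q.

Definition pos_partQ (a b c : Q) : Q :=
  (2 * d0Q (b * b) (c * c) + a * b * d2Q (a * a) (b * b))%Q.

Definition neg_partQ (a b c : Q) : Q :=
  ((7 # 10) * b * - d1Q (b * b) (c * c) + (51 # 100) * (b * c) * d2Q (b * b) (c * c)
   + (10 # 7) * a * - d1Q (a * a) (b * b))%Q.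

Lemma Q2R_frac (n : Z) (d : positive) : Q2R (n # d) = IZR n / IZR (Zpos d).
Proof. reflexivity. Qed.

Lemma Q2R_gQ y : 0 <= Q2R y -> Q2R (gQ y) = g (Q2R y).
Proof.
  intros Hy; unfold gQ, g.
  rewrite (Qeq_eqR _ _ (Qred_correct _)), Q2R_div, Q2R_plus, Q2R_frac, Rdiv_1_r; [reflexivity|].
  intros H0; apply Qeq_eqR in H0; rewrite Q2R_plus, !Q2R_frac in H0; lra.
Qed.

Lemma Q2R_sqr_ge0 a : 0 <= Q2R (a * a).
Proof. rewrite Q2R_mult; nra. Qed.

Lemma Q2R_gQ_mul_gQ y z : 0 <= Q2R y -> 0 <= Q2R z ->
  Q2R (gQ (y * gQ z)) = g (Q2R y * g (Q2R z)).
Proof.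
  intros Hy Hz.
  assert (Hgz : Q2R (gQ z) = g (Q2R z)) by (apply Q2R_gQ; lra).
  rewrite Q2R_gQ; rewrite Q2R_mult, Hgz; [reflexivity|].
  apply Rmult_le_pos, g_ge0; lra.
Qed.

Lemma Q2R_d0Q y z : 0 <= Q2R y -> 0 <= Q2R z -> Q2R (d0Q y z) = d0 (Q2R y) (Q2R z).
Proof.
  intros Hy Hz; unfold d0Q.
  rewrite d0_eq, !Q2R_plus, Q2R_gQ_mul_gQ, Q2R_gQ, Q2R_frac, Rdiv_1_r by lra; reflexivity.
Qed.

Lemma Q2R_d2Q y z : 0 <= Q2R y -> 0 <= Q2R z -> Q2R (d2Q y z) = d2 (Q2R y) (Q2R z).
Proof.
  intros Hy Hz; unfold d2Q.
  rewrite d2_eq, !Q2R_mult, Q2R_plus, Q2R_gQ_mul_gQ, Q2R_gQ, Q2R_frac, Rdiv_1_r by lra;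
    reflexivity.
Qed.

Lemma Q2R_d1Q y z : 0 <= Q2R y -> 0 <= Q2R z -> Q2R (d1Q y z) = d1 (Q2R y) (Q2R z).
Proof.
  intros Hy Hz; unfold d1Q.
  pose proof (d0_d1_d2_sum (Q2R y) (Q2R z) Hy Hz).
  rewrite !Q2R_minus, Q2R_d0Q, Q2R_d2Q, Q2R_frac, Rdiv_1_r by lra; lra.
Qed.

Lemma Q2R_pos_partQ a b c : Q2R (pos_partQ a b c) = pos_part (Q2R a) (Q2R b) (Q2R c).
Proof.
  unfold pos_partQ, pos_part.
  rewrite Q2R_plus, !Q2R_mult, Q2R_d0Q, Q2R_d2Q by apply Q2R_sqr_ge0.
  rewrite !Q2R_mult, Q2R_frac, Rdiv_1_r; reflexivity.
Qed.

Lemma Q2R_neg_partQ a b c : Q2R (neg_partQ a b c) = neg_part (Q2R a) (Q2R b) (Q2R c).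
Proof.
  unfold neg_partQ, neg_part.
  rewrite !Q2R_plus, !Q2R_mult, !Q2R_opp, !Q2R_d1Q, Q2R_d2Q by apply Q2R_sqr_ge0.
  rewrite !Q2R_mult, !Q2R_frac; reflexivity.
Qed.

Record ival := Ival { ival_lo : Q; ival_hi : Q }.

Definition in_ival (I : ival) (x : R) : Prop :=
  0 <= Q2R (ival_lo I) <= x /\ x <= Q2R (ival_hi I).

Definition ival_halves (I : ival) : ival * ival :=
  let m := Qred ((ival_lo I + ival_hi I) / 2) in (Ival (ival_lo I) m, Ival m (ival_hi I)).

Lemma in_ival_halves I x :
  in_ival I x -> in_ival (fst (ival_halves I)) x \/ in_ival (snd (ival_halves I)) x.
Proof.
  unfold ival_halves, in_ival; cbn [fst snd ival_lo ival_hi]; intros Hx.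
  rewrite (Qeq_eqR _ _ (Qred_correct _)), Q2R_div, Q2R_plus, Q2R_frac, Rdiv_1_r by discriminate.
  destruct (Rle_or_lt x ((Q2R (ival_lo I) + Q2R (ival_hi I)) / 2)); [left | right]; lra.
Qed.

Definition box : Type := ival * ival * ival.

Definition in_box (B : box) (a b c : R) : Prop :=
  let '(Ia, Ib, Ic) := B in in_ival Ia a /\ in_ival Ib b /\ in_ival Ic c.

Definition box_halves (k : nat) (B : box) : box * box :=
  let '(Ia, Ib, Ic) := B in
  match k with
  | O => ((fst (ival_halves Ia), Ib, Ic), (snd (ival_halves Ia), Ib, Ic))
  | S O => ((Ia, fst (ival_halves Ib), Ic), (Ia, snd (ival_halves Ib), Ic))
  | _ => ((Ia, Ib, fst (ival_halves Ic)), (Ia, Ib, snd (ival_halves Ic)))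
  end.

Lemma in_box_halves k B a b c : in_box B a b c ->
  in_box (fst (box_halves k B)) a b c \/ in_box (snd (box_halves k B)) a b c.
Proof.
  destruct B as [[Ia Ib] Ic]; intros (Ha & Hb & Hc).
  destruct k as [|[|k]]; simpl.
  - destruct (in_ival_halves Ia a Ha); tauto.
  - destruct (in_ival_halves Ib b Hb); tauto.
  - destruct (in_ival_halves Ic c Hc); tauto.
Qed.

Section BoxCertificate.

Variables (F G : R -> R -> R -> R) (FQ GQ : Q -> Q -> Q -> Q) (eps : Q).
Hypotheses (F_le : nondecreasing3 F) (G_le : nondecreasing3 G).
Hypothesis Q2R_FQ : forall a b c, Q2R (FQ a b c) = F (Q2R a) (Q2R b) (Q2R c).
Hypothesis Q2R_GQ : forall a b c, Q2R (GQ a b c) = G (Q2R a) (Q2R b) (Q2R c).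

Definition corner_test (B : box) : bool :=
  let '(Ia, Ib, Ic) := B in
  negb (Qle_bool (FQ (ival_lo Ia) (ival_lo Ib) (ival_lo Ic)
                  - GQ (ival_hi Ia) (ival_hi Ib) (ival_hi Ic)) eps).

(* The axes are bisected in turn; the [if]s (rather than [||], [&&]) keep [vm_compute] from
   evaluating the whole tree of depth [n]. *)
Fixpoint certify (n : nat) (B : box) : bool :=
  if corner_test B then true else
  match n with
  | O => false
  | S m =>
      let (B1, B2) := box_halves (Nat.modulo n 3) B in
      if certify m B1 then certify m B2 else false
  end.

Lemma corner_test_sound B a b c :
  corner_test B = true -> in_box B a b c -> Q2R eps < F a b c - G a b c.
Proof.
  destruct B as [[Ia Ib] Ic]; intros Htest (Ha & Hb & Hc); simpl in Htest.
  apply negb_true_iff in Htest.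
  assert (Hlt : (eps < FQ (ival_lo Ia) (ival_lo Ib) (ival_lo Ic)
                       - GQ (ival_hi Ia) (ival_hi Ib) (ival_hi Ic))%Q).
  { apply Qnot_le_lt; intros Hle; apply Qle_bool_iff in Hle; congruence. }
  apply Qlt_Rlt in Hlt; rewrite Q2R_minus, Q2R_FQ, Q2R_GQ in Hlt.
  unfold in_ival in *.
  pose proof (F_le (Q2R (ival_lo Ia)) a (Q2R (ival_lo Ib)) b (Q2R (ival_lo Ic)) c).
  pose proof (G_le a (Q2R (ival_hi Ia)) b (Q2R (ival_hi Ib)) c (Q2R (ival_hi Ic))).
  lra.
Qed.

Lemma certify_sound n B a b c :
  certify n B = true -> in_box B a b c -> Q2R eps < F a b c - G a b c.
Proof.
  revert B; induction n as [|n IH]; intros B Hcert HB; cbn [certify] in Hcert;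
    destruct (corner_test B) eqn:Hcorner; try exact (corner_test_sound B a b c Hcorner HB).
  - discriminate.
  - pose proof (in_box_halves (Nat.modulo (S n) 3) B a b c HB) as Hhalves.
    destruct (box_halves (Nat.modulo (S n) 3) B) as [B1 B2].
    destruct (certify n B1) eqn:H1; [|discriminate].
    destruct Hhalves as [HB1 | HB2]; [exact (IH B1 H1 HB1) | exact (IH B2 Hcert HB2)].
Qed.

End BoxCertificate.

Definition cube : box := let Ia := Ival 0 (61 # 50) in (Ia, Ia, Ia).

Lemma certify_lhs_cube : certify pos_partQ neg_partQ (1 # 50) 24 cube = true.
Proof. now vm_compute. Qed.

Lemma fRe_root_poly r : 0 < r -> fRe r = 0 ->
  let t := sqrt r in 7 * t ^ 7 + 7 * t ^ 5 - 10 * t ^ 4 - 10 * t ^ 2 - 10 = 0.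
Proof.
  intros Hr Hroot t; unfold fRe in Hroot; fold t in Hroot.
  assert (Ht : t * t = r) by (apply sqrt_sqrt; lra).
  rewrite <- Ht in Hroot.
  assert (0 <= t) by apply sqrt_pos.
  replace (7 * t ^ 7 + 7 * t ^ 5 - 10 * t ^ 4 - 10 * t ^ 2 - 10)
    with (- 7 * (t * t + 1) * ((t * t) ^ 2 + t * t + 1)
          * (10 / (7 * (t * t + 1)) - (t * t) ^ 2 * t / ((t * t) ^ 2 + t * t + 1))).
  - rewrite Hroot; ring.
  - field; nra.
Qed.

Lemma root_poly_pos t :
  61 / 50 <= t -> 0 < 7 * t ^ 7 + 7 * t ^ 5 - 10 * t ^ 4 - 10 * t ^ 2 - 10.
Proof.
  (* In powers of [t - 61/50] all coefficients are positive. *)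
  intros Ht; replace t with (61 / 50 + (t - 61 / 50)) by ring.
  assert (Hs : 0 <= t - 61 / 50) by lra.
  generalize dependent (t - 61 / 50); intros s Hs.
  pose proof (pow_le s 2 Hs); pose proof (pow_le s 3 Hs); pose proof (pow_le s 4 Hs).
  pose proof (pow_le s 5 Hs); pose proof (pow_le s 6 Hs); pose proof (pow_le s 7 Hs).
  lra.
Qed.

Lemma sqrt_lt_of_fRe_root r : 0 < r -> fRe r = 0 -> sqrt r < 61 / 50.
Proof.
  intros Hr Hroot.
  destruct (Rlt_or_le (sqrt r) (61 / 50)) as [Hlt | Hge]; [exact Hlt|].
  pose proof (fRe_root_poly r Hr Hroot); pose proof (root_poly_pos (sqrt r) Hge); lra.
Qed.

Theorem lemmaA2 (Re : R)
  (hRe_pos : 0 < Re) (hRe_root : fRe Re = 0)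
  (hRe_unique : forall r : R, 0 < r -> fRe r = 0 -> r = Re)
  (x y z : R)
  (hx : 0 < x < Re) (hy : 0 < y < Re) (hz : 0 < z < Re) :
  2 * Defs.d0 y z + 7 / 10 * sqrt y * Defs.d1 y z - 51 / 100 * sqrt (y * z) * Defs.d2 y z
  + 10 / 7 * sqrt x * Defs.d1 x y + sqrt (x * y) * Defs.d2 x y > 1 / 50.
Proof.
  assert (in_cube : forall u, 0 < u < Re -> in_ival (Ival 0 (61 # 50)) (sqrt u)).
  { intros u Hu; unfold in_ival; cbn [ival_lo ival_hi]; rewrite !Q2R_frac.
    pose proof (sqrt_pos u); pose proof (sqrt_lt_1 u Re).
    pose proof (sqrt_lt_of_fRe_root Re hRe_pos hRe_root); lra. }
  rewrite lhs_eq_pos_part_sub_neg_part by lra.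
  pose proof (certify_sound _ _ _ _ _ pos_part_le neg_part_le Q2R_pos_partQ Q2R_neg_partQ
                24 cube (sqrt x) (sqrt y) (sqrt z) certify_lhs_cube) as Hsound.
  rewrite Q2R_frac in Hsound.
  apply Rlt_gt, Hsound; unfold in_box, cube; split; [|split]; apply in_cube; assumption.
Qed.
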